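(* Let $n\ge2$, $f:\mathbb{R}^n\to\mathbb{R}^n$ continuously differentiable, $b_0\in\mathbb{R}^n_{\ge0}$, $\mu,\theta>0$, $r:=\mu/\theta$. Suppose $x^*\in\mathbb{R}^n_{\ge0}$ and $u_*>0$ satisfy $x^*_n=r$ and $f(x^* )-u_*re_n+b_0=0$. Let $J:=\partial f/\partial x(x^* )$, $H_n(s):=e_n^T\big(sI-(J-u_*e_ne_n^T)\big)^{-1}e_n$, and assume $H_n(0)>0$ and that there exists a symmetric positive definite $P_1\in\mathbb{R}^{(n-1)\times(n-1)}$ such that, with $P:=\mathrm{diag}(P_1,1)$, $$(J-u_*e_ne_n^T)^TP+P(J-u_*e_ne_n^T)\ \text{is negative definite}$$ (equivalently, writing $J_{11}=S^TJS$, $J_{12}=S^TJe_n$, $J_{21}=e_n^TJS$, $J_{22}=e_n^TJe_n$, the matrix $\begin{bmatrix}P_1J_{11}+J_{11}^TP_1 & P_1J_{12}+J_{21}^T\\ J_{12}^TP_1+J_{21} & 2(J_{22}-u_* )\end{bmatrix}$ is negative definite). Then for all $\eta,k_p>0$ the equilibrium $\big(x^*,\ \mu/(\eta u_* ),\ u_*/k_p\big)$ of $$\dot x=f(x)-k_px_nz_2e_n+b_0,\qquad \dot z_1=\mu-\eta k_pz_1z_2,\qquad \dot z_2=\theta x_n-\eta k_pz_1z_2$$ is locally exponentially stable.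
   Context: $S:=[e_1\ \cdots\ e_{n-1}]$, $e_i$ standard basis vectors of $\mathbb{R}^n$; $x_n=e_n^Tx$. Hurwitz stable: all eigenvalues have negative real part. An equilibrium is called locally exponentially stable here if the Jacobian matrix of the vector field at the equilibrium is Hurwitz stable. *)

From mathcomp Require Import all_boot all_algebra all_classical all_reals all_analysis.
From mathcomp Require Import complex.
Set Implicit Arguments. Unset Strict Implicit. Unset Printing Implicit Defensive.
Import GRing.Theory Num.Theory numFieldNormedType.Exports.
Local Open Scope ring_scope.

(* the last standard basis vector e_n of R^n (index n-1 in 0-based indexing) *)
Definition en (R : realType) (n : nat) : 'cV[R]_n :=
  \col_(i < n) (if (i == n.-1 :> nat) then 1 else 0).

Definition xlast (R : realType) (n : nat) (x : 'cV[R]_n) : R :=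
  ((en R n)^T *m x) 0 0.

Definition Smat (R : realType) (n : nat) : 'M[R]_(n, n.-1) :=
  \matrix_(i < n, j < n.-1) (if (i == j :> nat) then 1 else 0).

(* P = diag(P1, 1) = S P1 S^T + e_n e_n^T *)
Definition diagP (R : realType) (n : nat) (P1 : 'M[R]_n.-1) : 'M[R]_n :=
  Smat R n *m P1 *m (Smat R n)^T + en R n *m (en R n)^T.

Definition jac (R : realType) (m n : nat) (g : 'cV[R]_n -> 'cV[R]_m)
  (x : 'cV[R]_n) : 'M[R]_(m, n) :=
  \matrix_(i < m, j < n) ('d g x (delta_mx j 0)) i 0.

Definition C1 (R : realType) (m n : nat) (g : 'cV[R]_n -> 'cV[R]_m) : Prop :=
  (forall x, differentiable g x) /\ continuous (jac g).

Definition nonneg_vec (R : realType) (n : nat) (x : 'cV[R]_n) : Prop :=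
  forall i, 0 <= x i 0.

Definition pos_def (R : realType) (n : nat) (M : 'M[R]_n) : Prop :=
  M^T = M /\ forall v : 'cV[R]_n, v != 0 -> 0 < (v^T *m M *m v) 0 0.

Definition neg_def (R : realType) (n : nat) (M : 'M[R]_n) : Prop :=
  M^T = M /\ forall v : 'cV[R]_n, v != 0 -> (v^T *m M *m v) 0 0 < 0.

Definition hurwitz (R : realType) (n : nat) (A : 'M[R]_n) : Prop :=
  forall lam : R[i], eigenvalue (map_mx (fun a : R => (a%:C)%C) A) lam -> 'Re lam < 0.

Definition Hn (R : realType) (n : nat) (A : 'M[R]_n) (s : R) : R :=
  ((en R n)^T *m invmx (s%:M - A) *m en R n) 0 0.

Definition closed_loop (R : realType) (n : nat) (f : 'cV[R]_n -> 'cV[R]_n)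
  (b0 : 'cV[R]_n) (mu theta eta kp : R) (v : 'cV[R]_(n + 2)) : 'cV[R]_(n + 2) :=
  let x := usubmx v in
  let z := dsubmx v in
  let z1 := z 0 0 in
  let z2 := z 1 0 in
  col_mx (f x - (kp * xlast x * z2) *: en R n + b0)
         (\col_(k < 2) (if k == 0 then mu - eta * kp * z1 * z2
                        else theta * xlast x - eta * kp * z1 * z2)).

Definition eq_point (R : realType) (n : nat) (x : 'cV[R]_n) (z1 z2 : R)
  : 'cV[R]_(n + 2) :=
  col_mx x (\col_(k < 2) (if k == 0 then z1 else z2)).

(* local exponential stability in the sense of the paper: Jacobian Hurwitz *)
Definition loc_exp_stable (R : realType) (m : nat) (F : 'cV[R]_m -> 'cV[R]_m)
  (xe : 'cV[R]_m) : Prop :=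
  hurwitz (jac F xe).

(* Suppose the Jacobian of the closed loop at the equilibrium had an eigenvalue
   lam = x + i y with x >= 0 and eigenvector (u, a, b), u in C^n, a, b in C.
   Its first block row reads (A - lam) u = c b e with A = J - u_* e e^T and
   c = k_p x_n^*.  Taking the real part of u^* P (A u) with P = diag(P1, 1),
   so that P e = e, the Lyapunov inequality gives Re (conj b u_n) < 0 when
   u <> 0.  The two integrator rows, on the other hand, force
   K theta Re (conj b u_n) = x K |b|^2 + (x (x + D) + y^2) |a|^2 >= 0 with
   K, D > 0; and if u = 0 they force a = b = 0.  Hence every eigenvalue has
   negative real part. *)

From mathcomp Require Import all_boot all_algebra all_classical all_reals all_analysis.
From mathcomp Require Import complex ring lra.
Import order.Order.TTheory GRing.Theory Num.Theory numFieldNormedType.Exports.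
Local Open Scope ring_scope.

Lemma eigenvalue_trmx (F : fieldType) n (A : 'M[F]_n) a :
  eigenvalue A a -> eigenvalue A^T a.
Proof.
rewrite /eigenvalue /eigenspace -!mxrank_eq0 !mxrank_ker.
have -> : A^T - a%:M = (A - a%:M)^T by rewrite linearB /= tr_scalar_mx.
by rewrite mxrank_tr.
Qed.

Lemma mx_eq_mulmx_cV (R : pzSemiRingType) m p (A B : 'M[R]_(m, p)) :
  (forall v : 'cV[R]_p, A *m v = B *m v) -> A = B.
Proof.
move=> AB; apply/matrixP => i j.
by move/matrixP: (AB (delta_mx j 0)) => /(_ i 0); rewrite -!colE !mxE.
Qed.

Lemma ord2_cases (k : 'I_2) : k = 0 \/ k = 1.
Proof. by case: k => -[|[|//]] ?; [left | right]; apply/val_inj. Qed.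

Lemma cV2_eq0 (R : nmodType) (z : 'cV[R]_2) : z 0 0 = 0 -> z 1 0 = 0 -> z = 0.
Proof.
move=> z0 z1; apply/matrixP => i j; rewrite (ord1 j) mxE.
by case: (ord2_cases i) => ->.
Qed.

Lemma en_ord_max (R : realType) n : en R n.+1 = delta_mx ord_max 0.
Proof.
apply/matrixP => i j; rewrite (ord1 j) !mxE andbT.
by rewrite -[i == ord_max]/(i == n :> nat); case: (_ == _).
Qed.

Lemma mulmx_en_enT (R : realType) n (x : 'cV[R]_n) :
  en R n *m (en R n)^T *m x = xlast x *: en R n.
Proof.
by rewrite -mulmxA [(en R n)^T *m x]mx11_scalar mul_mx_scalar.
Qed.

Lemma xlast_ord_max (R : realType) n (x : 'cV[R]_n.+1) : xlast x = x ord_max 0.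
Proof.
by rewrite /xlast en_ord_max trmx_delta -rowE mxE.
Qed.

Section QuadraticForms.
Context {R : realFieldType} {m : nat}.
Implicit Types (u v w : 'cV[R]_m) (M : 'M[R]_m).

Definition qform u M v : R := (u^T *m M *m v) 0 0.

Lemma qformC u M v : M^T = M -> qform u M v = qform v M u.
Proof.
move=> MT; transitivity ((u^T *m M *m v)^T 0 0); first by rewrite [RHS]mxE.
by rewrite !trmx_mul trmxK MT mulmxA.
Qed.

Lemma qformDr u M v w : qform u M (v + w) = qform u M v + qform u M w.
Proof. by rewrite /qform mulmxDr mxE. Qed.

Lemma qformNr u M v : qform u M (- v) = - qform u M v.
Proof. by rewrite /qform mulmxN mxE. Qed.

Lemma qformZr u M a v : qform u M (a *: v) = a * qform u M v.
Proof. by rewrite /qform -scalemxAr mxE. Qed.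

Lemma qform0l M v : qform 0 M v = 0.
Proof. by rewrite /qform trmx0 !mul0mx mxE. Qed.

Lemma qform_sum_mx u A P : P^T = P ->
  qform u (A^T *m P + P *m A) u = 2 * qform u P (A *m u).
Proof.
move=> PT; rewrite {1}/qform mulmxDr mulmxDl mxE mulr2n mulrDl mul1r.
congr (_ + _); last by rewrite /qform !mulmxA.
by rewrite -[RHS]qformC // /qform trmx_mul !mulmxA.
Qed.
End QuadraticForms.

Section DiagP.
Context {R : realType} {n : nat} {P1 : 'M[R]_n}.
Local Notation e := (en R n.+1).
Local Notation S := (Smat R n.+1).
Local Notation P := (@diagP R n.+1 P1).

Lemma en_neq0 : e != 0.
Proof.
apply/negP => /eqP/matrixP/(_ ord_max 0).
by rewrite en_ord_max !mxE !eqxx => /eqP; rewrite oner_eq0.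
Qed.

Lemma Smat_tr_en : S^T *m e = 0.
Proof.
rewrite en_ord_max -colE; apply/matrixP => i j; rewrite !mxE.
by rewrite eqn_leq leqNgt ltn_ord.
Qed.

Lemma en_tr_en : e^T *m e = 1%:M.
Proof. by rewrite en_ord_max trmx_delta mul_delta_mx [LHS]mx11_scalar mxE. Qed.

Lemma diagP_en : P *m e = e.
Proof. by rewrite mulmxDl -!mulmxA Smat_tr_en en_tr_en !mulmx0 add0r mulmx1. Qed.

Lemma diagP_sym : P1^T = P1 -> P^T = P.
Proof. by move=> P1T; rewrite /diagP linearD /= !trmx_mul !trmxK P1T mulmxA. Qed.

Lemma diagP_qform v :
  qform v (P) v = qform (S^T *m v) P1 (S^T *m v) + ((e^T *m v) 0 0) ^+ 2.
Proof.
rewrite /qform /diagP mulmxDr mulmxDl mxE; congr (_ + _).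
  by rewrite trmx_mul trmxK !mulmxA.
rewrite !mulmxA -(mulmxA (v^T *m e)).
have -> : v^T *m e = (e^T *m v)^T by rewrite trmx_mul trmxK.
by rewrite mxE big_ord1 !mxE expr2.
Qed.

Lemma diagP_ge0 : pos_def P1 -> forall v, 0 <= qform v P v.
Proof.
move=> [_ P1_gt0] v; rewrite diagP_qform addr_ge0 ?sqr_ge0 //.
by have [->|/P1_gt0/ltW] := eqVneq (S^T *m v) 0; rewrite ?qform0l.
Qed.
End DiagP.

Section RealEigenPair.
Variable R : rcfType.

Lemma eigenvalue_real_pair n (M : 'M[R]_n) (lam : R[i]) :
  eigenvalue (map_mx (fun a : R => (a%:C)%C) M) lam ->
  exists p q : 'cV[R]_n, [/\ p != 0 \/ q != 0,
    M *m p = complex.Re lam *: p - complex.Im lam *: q &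
    M *m q = complex.Im lam *: p + complex.Re lam *: q].
Proof.
move=> /eigenvalue_trmx /eigenvalueP [v hv v0].
have {hv} hw : map_mx (fun a : R => (a%:C)%C) M *m v^T = lam *: v^T.
  by apply: trmx_inj; rewrite trmx_mul trmxK hv linearZ /= trmxK.
exists (map_mx (@complex.Re R) v^T), (map_mx (@complex.Im R) v^T); split.
- have [/matrixP Re0|] := eqVneq (map_mx (@complex.Re R) v^T) 0; last by left.
  have [/matrixP Im0|] := eqVneq (map_mx (@complex.Im R) v^T) 0; last by right.
  case/eqP: v0; apply/matrixP => i j; move: (Re0 j i) (Im0 j i).
  by rewrite !mxE; case: (v i j) => a b /= -> ->.
- apply/matrixP => i j; transitivity (complex.Re ((lam *: v^T) i j)); last first.
    by rewrite !mxE; case: (lam) => a b; case: (v j i).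
  rewrite -hw !mxE (raddf_sum (@complex.Re R : Rcomplex R -> R)).
  by apply: eq_bigr => k _; rewrite !mxE; case: (v j k) => a b /=; rewrite mul0r subr0.
- apply/matrixP => i j; transitivity (complex.Im ((lam *: v^T) i j)); last first.
    by rewrite !mxE; case: (lam) => a b; case: (v j i) => c d /=; rewrite addrC.
  rewrite -hw !mxE (raddf_sum (@complex.Im R : Rcomplex R -> R)).
  by apply: eq_bigr => k _; rewrite !mxE; case: (v j k) => a b /=; rewrite mul0r addr0.
Qed.

Lemma Re_complex_lt0 (lam : R[i]) : ('Re lam < 0) = (complex.Re lam < 0).
Proof. by rewrite -complexRe ltcE /= eqxx. Qed.
End RealEigenPair.

(* For u = pu + i qu, u^* (A^T P + P A) u = 2 Re (u^* P A u), which the two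
   equations for A pu and A qu expand as
   2 x (pu^T P pu + qu^T P qu) + 2 c (pb e^T pu + qb e^T qu). *)
Lemma lyapunov_coupling_lt0 {R : realFieldType} {m} {A P : 'M[R]_m} {e pu qu : 'cV[R]_m}
    {c x y pb qb : R} :
  P^T = P -> (forall v, 0 <= qform v P v) ->
  (forall v, v != 0 -> qform v (A^T *m P + P *m A) v < 0) ->
  P *m e = e ->
  A *m pu = x *: pu - y *: qu + (c * pb) *: e ->
  A *m qu = y *: pu + x *: qu + (c * qb) *: e ->
  pu != 0 \/ qu != 0 -> 0 <= x -> 0 < c ->
  pb * (e^T *m pu) 0 0 + qb * (e^T *m qu) 0 0 < 0.
Proof.
move=> PT P_ge0 S_lt0 Pe Apu Aqu pq0 x_ge0 c_gt0.
have S_le0 v : qform v (A^T *m P + P *m A) v <= 0.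
  by have [->|/S_lt0/ltW] := eqVneq v 0; rewrite ?qform0l.
have S_sum_lt0 : qform pu (A^T *m P + P *m A) pu + qform qu (A^T *m P + P *m A) qu < 0.
  by case: pq0 => /S_lt0; have := S_le0 pu; have := S_le0 qu; lra.
have Pe_qform v : qform v P e = (e^T *m v) 0 0.
  rewrite /qform -mulmxA Pe; transitivity ((v^T *m e)^T 0 0); first by rewrite [RHS]mxE.
  by rewrite trmx_mul trmxK.
move: S_sum_lt0; rewrite !qform_sum_mx // Apu Aqu.
rewrite !(qformDr, qformNr, qformZr) !Pe_qform (qformC qu P pu PT).
by have := P_ge0 pu; have := P_ge0 qu; nra.
Qed.

(* In complex form, with a = a1 + i a2, b = b1 + i b2, p = pn + i qn and
   lam = x + i y, the hypotheses say (lam + D) a = - K b and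
   theta p = lam (b - a); hence
   K theta Re (conj b p) = x K |b|^2 + (x (x + D) + y^2) |a|^2. *)
Lemma integrator_coupling_ge0 {R : realFieldType} {theta K D x y a1 a2 b1 b2 pn qn : R} :
  0 < theta -> 0 < K -> 0 < D -> 0 <= x ->
  - (D * a1 + K * b1) = x * a1 - y * a2 ->
  theta * pn - (D * a1 + K * b1) = x * b1 - y * b2 ->
  - (D * a2 + K * b2) = y * a1 + x * a2 ->
  theta * qn - (D * a2 + K * b2) = y * b1 + x * b2 ->
  0 <= b1 * pn + b2 * qn.
Proof.
move=> theta_gt0 K_gt0 D_gt0 x_ge0 ea1 eb1 ea2 eb2.
have Kb1 : K * b1 = y * a2 - (x + D) * a1 by lra.
have Kb2 : K * b2 = - y * a1 - (x + D) * a2 by lra.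
have tp : theta * pn = x * (b1 - a1) - y * (b2 - a2) by lra.
have tq : theta * qn = x * (b2 - a2) + y * (b1 - a1) by lra.
have key : K * theta * (b1 * pn + b2 * qn) =
    x * K * (b1 ^+ 2 + b2 ^+ 2) + (x * (x + D) + y ^+ 2) * (a1 ^+ 2 + a2 ^+ 2).
  transitivity (K * b1 * (theta * pn) + K * b2 * (theta * qn)); first by ring.
  rewrite tp tq; transitivity (x * K * (b1 ^+ 2 + b2 ^+ 2)
      - x * (a1 * (K * b1) + a2 * (K * b2)) + y * (a2 * (K * b1) - a1 * (K * b2))).
    by ring.
  by rewrite Kb1 Kb2; ring.
have : 0 <= K * theta * (b1 * pn + b2 * qn).
  rewrite key; apply: addr_ge0; apply: mulr_ge0; rewrite ?addr_ge0 ?sqr_ge0 //.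
  - by rewrite mulr_ge0 // ltW.
  - by rewrite mulr_ge0 // addr_ge0 // ltW.
by rewrite pmulr_rge0 // mulr_gt0.
Qed.

Section IntegralFeedback.
Variable R : realType.
Variables (n : nat) (A : 'M[R]_n) (e : 'cV[R]_n) (c theta K D : R).

Definition integral_feedback_mx : 'M[R]_(n + 2) :=
  block_mx A (\matrix_(i < n, j < 2) (if j == 0 then 0 else - c * e i 0))
             (\matrix_(i < 2, j < n) (if i == 0 then 0 else theta * e j 0))
             (\matrix_(i < 2, j < 2) (if j == 0 then - D else - K)).

Lemma mul_integral_feedback_mx (hu : 'cV[R]_n) (hz : 'cV[R]_2) :
  integral_feedback_mx *m col_mx hu hz =
  col_mx (A *m hu - (c * hz 1 0) *: e)
         (\col_(k < 2) (if k == 0 then - (D * hz 0 0 + K * hz 1 0)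
                        else theta * (e^T *m hu) 0 0 - (D * hz 0 0 + K * hz 1 0))).
Proof.
have lift01 : lift ord0 ord0 = 1 :> 'I_2 by apply/val_inj.
rewrite mul_block_col; congr col_mx; apply/matrixP => i j; rewrite (ord1 j).
  by rewrite !mxE !big_ord_recl big_ord0 !mxE /= lift01; ring.
rewrite !mxE !big_ord_recl big_ord0 !mxE /= lift01.
have [->|] := eqVneq i 0.
  by rewrite big1 => [|k _]; rewrite ?mxE ?mul0r //; ring.
move=> /negPf i_neq0; rewrite mulr_sumr.
under eq_bigr => k _ do rewrite !mxE i_neq0 -mulrA.
under [in RHS]eq_bigr => k _ do rewrite mxE.
ring.
Qed.

Hypotheses (c_gt0 : 0 < c) (theta_gt0 : 0 < theta) (K_gt0 : 0 < K) (D_gt0 : 0 < D).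

Lemma integral_feedback_zpart_eq0 {x y : R} {pz qz : 'cV[R]_2} : e != 0 -> 0 <= x ->
  (c * pz 1 0) *: e == 0 -> (c * qz 1 0) *: e == 0 ->
  - (D * pz 0 0 + K * pz 1 0) = x * pz 0 0 - y * qz 0 0 ->
  - (D * qz 0 0 + K * qz 1 0) = y * pz 0 0 + x * qz 0 0 ->
  pz = 0 /\ qz = 0.
Proof.
move=> e_neq0 x_ge0; rewrite !scaler_eq0 (negbTE e_neq0) !orbF (gt_eqF c_gt0) /=.
move=> /eqP pb0 /eqP qb0; rewrite pb0 qb0 !mulr0 !addr0 => ea1 ea2.
have : (x + D) * (pz 0 0 ^+ 2 + qz 0 0 ^+ 2) = 0.
  transitivity (pz 0 0 * (x * pz 0 0 - y * qz 0 0 + D * pz 0 0)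
                + qz 0 0 * (y * pz 0 0 + x * qz 0 0 + D * qz 0 0)); first by ring.
  by rewrite -ea1 -ea2; ring.
move/eqP; rewrite mulf_eq0 (gt_eqF (ltr_wpDl x_ge0 D_gt0)) /=.
rewrite (paddr_eq0 (sqr_ge0 _) (sqr_ge0 _)) !sqrf_eq0 => /andP[/eqP pa0 /eqP qa0].
by split; apply: cV2_eq0.
Qed.

Lemma integral_feedback_hurwitz (P : 'M[R]_n) :
  P^T = P -> (forall v, 0 <= qform v P v) ->
  (forall v, v != 0 -> qform v (A^T *m P + P *m A) v < 0) ->
  P *m e = e -> e != 0 -> hurwitz integral_feedback_mx.
Proof.
move=> PT P_ge0 PA_lt0 Pe e_neq0 lam /eigenvalue_real_pair [p [q [pq0 Mp Mq]]].
rewrite Re_complex_lt0 ltNge; apply/negP => x_ge0.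
move: (complex.Re lam) (complex.Im lam) x_ge0 Mp Mq => x y x_ge0.
rewrite -(vsubmxK p) -(vsubmxK q) in pq0 *.
move: (usubmx p) (dsubmx p) (usubmx q) (dsubmx q) pq0 => pu pz qu qz pq0.
rewrite !mul_integral_feedback_mx !scale_col_mx opp_col_mx !add_col_mx.
move=> /eq_col_mx [Apu /matrixP Bp] /eq_col_mx [Aqu /matrixP Bq].
set pn := (e^T *m pu) 0 0 in Bp; set qn := (e^T *m qu) 0 0 in Bq.
move: (Bp 0 0) (Bp 1 0) (Bq 0 0) (Bq 1 0); rewrite !mxE /= => ea1 eb1 ea2 eb2.
have pqu_neq0 : pu != 0 \/ qu != 0.
  have [pu0|] := eqVneq pu 0; last by left.
  have [qu0|] := eqVneq qu 0; last by right.
  move: Apu Aqu; rewrite pu0 qu0 mulmx0 !scaler0 !subr0 !sub0r addr0.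
  move=> /eqP; rewrite oppr_eq0 => pe0 /eqP; rewrite oppr_eq0 => qe0.
  have [pz0 qz0] := integral_feedback_zpart_eq0 e_neq0 x_ge0 pe0 qe0 ea1 ea2.
  by move: pq0; rewrite pu0 qu0 pz0 qz0 col_mx0 eqxx; case.
have := lyapunov_coupling_lt0 PT P_ge0 PA_lt0 Pe (canRL (subrK _) Apu)
  (canRL (subrK _) Aqu) pqu_neq0 x_ge0 c_gt0.
have := integrator_coupling_ge0 theta_gt0 K_gt0 D_gt0 x_ge0 ea1 eb1 ea2 eb2.
by rewrite -/pn -/qn; lra.
Qed.
End IntegralFeedback.
Arguments integral_feedback_mx {R n}.
Arguments integral_feedback_hurwitz {R n A e c theta K D}.

Section MatrixDifferential.
Context {R : realType}.

Lemma cV_sum_delta m (v : 'cV[R]_m) : v = \sum_(i < m) v i 0 *: delta_mx i 0.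
Proof. by rewrite {1}[v]matrix_sum_delta; apply: eq_bigr => i _; rewrite big_ord1. Qed.

Lemma is_diff_coord {m p} (x : 'M[R]_(m, p)) i j :
  is_diff x (fun y : 'M[R]_(m, p) => y i j) (fun y => y i j).
Proof.
have @c : {linear 'M[R]_(m, p) -> R}.
  by exists (fun N : 'M[R]_(m, p) => N i j); do 2![eexists]; do ?[constructor];
     rewrite ?mxE// => ? *; rewrite ?mxE//; move=> ?; rewrite !mxE.
have c_cont : continuous c by exact: coord_continuous.
by apply: DiffDef; [exact: differentiable_coord | rewrite (@diff_lin _ _ _ c)].
Qed.

Lemma diff_coord (V : normedModType R) m p (F : V -> 'M[R]_(m, p)) x h i j :
  differentiable F x -> 'd F x h i j = 'd (fun y => F y i j) x h.
Proof.
move=> /differentiableP dF.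
rewrite (_ : (fun y => F y i j) = (fun N : 'M[R]_(m, p) => N i j) \o F) //.
have dFij := is_diff_comp dF (is_diff_coord (F x) i j).
by rewrite [in RHS]diff_val.
Qed.

Lemma differentiable_coordwise (V : normedModType R) m (F : V -> 'cV[R]_m) x :
  (forall i, differentiable (fun y => F y i 0) x) -> differentiable F x.
Proof.
move=> dF; have -> : F = \sum_(i < m) (fun y => F y i 0 *: (delta_mx i 0 : 'cV[R]_m)).
  by apply/funext => y; rewrite fct_sumE; exact: cV_sum_delta.
by apply: differentiable_sum => i; exact: differentiableZl.
Qed.

Lemma continuous_usubmx m1 m2 p :
  continuous (usubmx : 'M[R]_(m1 + m2, p) -> 'M[R]_(m1, p)).
Proof.
move=> u A /nbhs_ballP[r /= r_gt0 rA]; apply/nbhs_ballP; exists r => //= v [_ uv].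
by apply: rA; split => // i j; apply: le_lt_trans (uv (lshift m2 i) j); rewrite !mxE.
Qed.

Lemma is_diff_usubmx {m1 m2 p} (x : 'M[R]_(m1 + m2, p)) : is_diff x usubmx usubmx.
Proof.
apply: DiffDef; first exact/linear_differentiable/continuous_usubmx.
by rewrite diff_lin //; exact: continuous_usubmx.
Qed.

Lemma jac_mulmx m p (g : 'cV[R]_p -> 'cV[R]_m) x (h : 'cV[R]_p) :
  jac g x *m h = 'd g x h.
Proof.
apply/matrixP => i k; rewrite (ord1 k) !mxE.
rewrite {2}[h]cV_sum_delta linear_sum summxE.
by apply: eq_bigr => j _; rewrite linearZ !mxE mulrC.
Qed.
End MatrixDifferential.

Section ClosedLoop.
Variables (R : realType) (n : nat) (f : 'cV[R]_n.+1 -> 'cV[R]_n.+1).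
Variables (b0 : 'cV[R]_n.+1) (mu theta eta kp : R).
Local Notation F := (closed_loop f b0 mu theta eta kp).
Local Notation e := (en R n.+1).

Let coord (i : 'I_(n.+1 + 2)) (v : 'cV[R]_(n.+1 + 2)) : R := v i 0.
Let ixn : 'I_(n.+1 + 2) := lshift 2 ord_max.
Let iz1 : 'I_(n.+1 + 2) := rshift n.+1 0.
Let iz2 : 'I_(n.+1 + 2) := rshift n.+1 1.

Lemma closed_loop_top j : (fun v => F v (lshift 2 j) 0) =
  (fun x : 'cV[R]_n.+1 => x j 0) \o f \o usubmx
  - (kp * e j 0) *: (coord ixn * coord iz2) + cst (b0 j 0).
Proof.
apply/funext => v; rewrite /closed_loop col_mxEu !mxE xlast_ord_max mxE !fctE /=.
by rewrite -[_ *: _]/(_ * _) /coord; ring.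
Qed.

Lemma closed_loop_z1 : (fun v => F v iz1 0) =
  cst mu - (eta * kp) *: (coord iz1 * coord iz2).
Proof.
apply/funext => v; rewrite /closed_loop col_mxEd !mxE !fctE /=.
by rewrite -[_ *: _]/(_ * _) /coord; ring.
Qed.

Lemma closed_loop_z2 : (fun v => F v iz2 0) =
  theta *: coord ixn - (eta * kp) *: (coord iz1 * coord iz2).
Proof.
apply/funext => v; rewrite /closed_loop col_mxEd !mxE xlast_ord_max mxE !fctE /=.
by rewrite -![_ *: _]/(_ * _) /coord; ring.
Qed.

Variable v : 'cV[R]_(n.+1 + 2).
Hypothesis f_diff : differentiable f (usubmx v).

Let is_diff_coordv i : is_diff v (coord i) (coord i) := is_diff_coord v i 0.

Lemma is_diff_closed_loop_top j : is_diff v (fun w => F w (lshift 2 j) 0)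
  (fun h => 'd f (usubmx v) (usubmx h) j 0
            - kp * e j 0 * (v ixn 0 * h iz2 0 + v iz2 0 * h ixn 0)).
Proof.
have := is_diff_coordv ixn; have := is_diff_coordv iz2.
have := is_diff_comp (is_diff_comp (is_diff_usubmx v) (differentiableP f_diff))
                     (is_diff_coord (f (usubmx v)) j 0).
rewrite closed_loop_top => *; apply: is_diff_eq; apply/funext => h.
by rewrite !fctE /= -![_ *: _]/(_ * _) /coord -[(0 : _ -> R) h]/(0 : R) addr0.
Qed.

Lemma is_diff_closed_loop_z1 : is_diff v (fun w => F w iz1 0)
  (fun h => - (eta * kp) * (v iz1 0 * h iz2 0 + v iz2 0 * h iz1 0)).
Proof.
have := is_diff_coordv iz1; have := is_diff_coordv iz2.
rewrite closed_loop_z1 => *; apply: is_diff_eq; apply/funext => h.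
by rewrite !fctE /= -![_ *: _]/(_ * _) /coord -[(0 : _ -> R) h]/(0 : R); ring.
Qed.

Lemma is_diff_closed_loop_z2 : is_diff v (fun w => F w iz2 0)
  (fun h => theta * h ixn 0 - eta * kp * (v iz1 0 * h iz2 0 + v iz2 0 * h iz1 0)).
Proof.
have := is_diff_coordv ixn; have := is_diff_coordv iz1; have := is_diff_coordv iz2.
rewrite closed_loop_z2 => *; apply: is_diff_eq; apply/funext => h.
by rewrite !fctE /= -![_ *: _]/(_ * _) /coord; ring.
Qed.

Lemma differentiable_closed_loop : differentiable F v.
Proof.
apply: differentiable_coordwise => i; rewrite -(splitK i).
case: (fintype.split i) => [j|k] /=.
  by have := is_diff_closed_loop_top j => ?; exact: ex_diff.
case: (ord2_cases k) => ->.
  by have := is_diff_closed_loop_z1 => ?; exact: ex_diff.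
by have := is_diff_closed_loop_z2 => ?; exact: ex_diff.
Qed.

Lemma diff_closed_loop h :
  'd F v h = integral_feedback_mx (jac f (usubmx v) - (kp * v iz2 0) *: (e *m e^T)) e
               (kp * v ixn 0) theta (eta * kp * v iz1 0) (eta * kp * v iz2 0) *m h.
Proof.
rewrite -[h]vsubmxK; move: (usubmx h) (dsubmx h) => hu hz.
rewrite mul_integral_feedback_mx; apply/matrixP => i k; rewrite (ord1 k).
rewrite diff_coord; last exact: differentiable_closed_loop.
rewrite -(splitK i); case: (fintype.split i) => [j|k'] /=.
  have := is_diff_closed_loop_top j => ?; rewrite diff_val /ixn /iz2 !col_mxEu col_mxEd col_mxKu.
  rewrite mulmxBl -scalemxAl mulmx_en_enT jac_mulmx xlast_ord_max !mxE.
  ring.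
rewrite col_mxEd mxE; case: (ord2_cases k') => ->.
  have := is_diff_closed_loop_z1 => ?; rewrite diff_val /iz1 /iz2 !col_mxEd /=.
  ring.
have := is_diff_closed_loop_z2 => ?; rewrite diff_val /ixn /iz1 /iz2 col_mxEu !col_mxEd /=.
by rewrite -/(xlast hu) xlast_ord_max; ring.
Qed.

Lemma jac_closed_loop :
  jac F v = integral_feedback_mx (jac f (usubmx v) - (kp * v iz2 0) *: (e *m e^T)) e
              (kp * v ixn 0) theta (eta * kp * v iz1 0) (eta * kp * v iz2 0).
Proof. by apply: mx_eq_mulmx_cV => h; rewrite jac_mulmx diff_closed_loop. Qed.
End ClosedLoop.

Lemma jac_closed_loop_eq_point (R : realType) n (f : 'cV[R]_n.+1 -> 'cV[R]_n.+1) b0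
    (mu theta eta kp : R) (xs : 'cV[R]_n.+1) (z1 z2 : R) :
  differentiable f xs ->
  jac (closed_loop f b0 mu theta eta kp) (eq_point xs z1 z2) =
  integral_feedback_mx (jac f xs - (kp * z2) *: (en R n.+1 *m (en R n.+1)^T)) (en R n.+1)
    (kp * xlast xs) theta (eta * kp * z1) (eta * kp * z2).
Proof.
move=> f_diff; rewrite jac_closed_loop /eq_point col_mxKu //.
by rewrite col_mxEu !col_mxEd !mxE xlast_ord_max.
Qed.

Theorem mainTheorem14 (R : realType) (n : nat) (hn : (2 <= n)%N)
  (f : 'cV[R]_n -> 'cV[R]_n) (hf : C1 f)
  (b0 : 'cV[R]_n) (hb0 : nonneg_vec b0)
  (mu theta : R) (hmu : 0 < mu) (htheta : 0 < theta)
  (xs : 'cV[R]_n) (us : R) (hxs : nonneg_vec xs) (hus : 0 < us)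
  (hxn : xlast xs = mu / theta)
  (heq : f xs - (us * (mu / theta)) *: en R n + b0 = 0)
  (hH : 0 < Hn (jac f xs - us *: (en R n *m (en R n)^T)) 0)
  (P1 : 'M[R]_n.-1) (hP1 : pos_def P1)
  (hLyap : neg_def ((jac f xs - us *: (en R n *m (en R n)^T))^T *m diagP P1
                    + diagP P1 *m (jac f xs - us *: (en R n *m (en R n)^T)))) :
  forall eta kp : R, 0 < eta -> 0 < kp ->
    loc_exp_stable (closed_loop f b0 mu theta eta kp)
                   (eq_point xs (mu / (eta * us)) (us / kp)).
Proof.
move=> eta kp eta_gt0 kp_gt0; clear hb0 hxs heq hH.
case: n hn f hf b0 xs hxn P1 hP1 hLyap => [//|n] _ f [f_diff _] b0 xs hxn P1 hP1 hLyap.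
rewrite /loc_exp_stable jac_closed_loop_eq_point // mulrCA divff ?gt_eqF // mulr1 hxn.
apply: (integral_feedback_hurwitz _ _ _ _ _ (diagP_sym hP1.1) (diagP_ge0 hP1) hLyap.2
          diagP_en en_neq0) => //; by rewrite ?(mulr_gt0, invr_gt0).
Qed.
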